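(* Let $A$ and $B$ be square $\mathbb{N}$-matrices. If $A$ and $B$ are balanced strong shift equivalent, then $A$ and $B$ are unitally shift equivalent.
   Context: A rectangular $\{0,1\}$-matrix $D$ is a division matrix if every row contains at least one $1$ and every column contains exactly one $1$. For square $\mathbb{N}$-matrices $A,B$ with no zero rows, $B$ is an outsplit of $A$ if there are a division matrix $D$ and an $\mathbb{N}$-matrix $E$ with $A=DE$ and $B=ED$. $A$ and $B$ are balanced elementary strong shift equivalent if there are a division matrix $D$ and rectangular $\mathbb{N}$-matrices $R_A,R_B$ with $A=D^tR_A$, $B=D^tR_B$ and $R_AD^t=R_BD^t$. Balanced strong shift equivalence is the equivalence relation generated by balanced elementary strong shift equivalence and outsplits. Two square $\mathbb{N}$-matrices $A,B$ are shift equivalent if there are an integer $\ell\ge1$ and rectangular $\mathbb{N}$-matrices $R,S$ with $A^\ell=RS$, $B^\ell=SR$, $AR=RB$, $BS=SA$. Such a shift equivalence $(R,S)$ is unital if there are $m,k\in\mathbb{N}$ with $(B^t)^mR^t\underline{1}=(B^t)^{m+k}\underline{1}$, where $\underline1$ is the all-ones column vector. $A$ and $B$ are unitally shift equivalent if a unital shift equivalence from $A$ to $B$ exists. *)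

From HB Require Import structures.
From mathcomp Require Import all_boot all_order all_algebra.
From Stdlib Require Import Relations.Relation_Operators.
Set Implicit Arguments. Unset Strict Implicit. Unset Printing Implicit Defensive.
Import GRing.Theory.
Local Open Scope ring_scope.

Definition division_matrix (m n : nat) (D : 'M[nat]_(m, n)) : Prop :=
  (forall i j, D i j = 0%N \/ D i j = 1%N) /\
  (forall i, exists j, D i j = 1%N) /\
  (forall j, exists! i, D i j = 1%N).

Definition no_zero_rows (n : nat) (A : 'M[nat]_n) : Prop :=
  forall i, exists j, A i j <> 0%N.

Definition outsplit (m n : nat) (A : 'M[nat]_m) (B : 'M[nat]_n) : Prop :=
  no_zero_rows A /\ no_zero_rows B /\
  exists (D : 'M[nat]_(m, n)) (E : 'M[nat]_(n, m)),
    division_matrix D /\ A = D *m E /\ B = E *m D.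

(* balanced elementary strong shift equivalence (A and B necessarily have
   the same size, since both equal D^T times something) *)
Definition bal_elem_sse (m : nat) (A B : 'M[nat]_m) : Prop :=
  exists (k : nat) (D : 'M[nat]_(k, m)) (RA RB : 'M[nat]_(k, m)),
    division_matrix D /\ A = D^T *m RA /\ B = D^T *m RB /\
    RA *m D^T = RB *m D^T.

Definition sqmat := {n : nat & 'M[nat]_n}.

Definition bsse_step (X Y : sqmat) : Prop :=
  outsplit (projT2 X) (projT2 Y) \/
  exists (m : nat) (A B : 'M[nat]_m),
    X = existT _ m A /\ Y = existT _ m B /\ bal_elem_sse A B.

Definition bal_sse (m n : nat) (A : 'M[nat]_m) (B : 'M[nat]_n) : Prop :=
  clos_refl_sym_trans sqmat bsse_step (existT _ m A) (existT _ n B).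

Definition mxpow (n : nat) (A : 'M[nat]_n) (l : nat) : 'M[nat]_n :=
  iter l (fun M => A *m M) 1%:M.

Definition shift_equiv_via (m n : nat) (A : 'M[nat]_m) (B : 'M[nat]_n)
    (l : nat) (R : 'M[nat]_(m, n)) (S : 'M[nat]_(n, m)) : Prop :=
  (1 <= l)%N /\ mxpow A l = R *m S /\ mxpow B l = S *m R /\
  A *m R = R *m B /\ B *m S = S *m A.

Definition unitally_se (m n : nat) (A : 'M[nat]_m) (B : 'M[nat]_n) : Prop :=
  exists l (R : 'M[nat]_(m, n)) (S : 'M[nat]_(n, m)),
    shift_equiv_via A B l R S /\
    exists p k : nat,
      mxpow B^T p *m R^T *m (const_mx 1%N : 'cV[nat]_m) =
      mxpow B^T (p + k) *m (const_mx 1%N : 'cV[nat]_n).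

(* Unital shift equivalence is an equivalence relation: shift equivalences
   compose (lags add) and can be reversed at the cost of a longer lag, and the
   unitality condition, read as an equality of column sums, is transported
   along both constructions.  It therefore suffices to treat one generating
   step.  An outsplit A = DE, B = ED is a shift equivalence of lag 1 via
   (D, E), unital because the columns of a division matrix sum to 1.  For a
   balanced step, R_A D^t = R_B D^t gives A^2 = BA and B^2 = AB, so (B, A) is a
   shift equivalence of lag 2, trivially unital with R = B. *)

From mathcomp Require Import all_boot all_order all_algebra.
From Stdlib Require Import Relations.Relation_Operators.
Set Implicit Arguments. Unset Strict Implicit. Unset Printing Implicit Defensive.
Import GRing.Theory.
Local Open Scope ring_scope.

Lemma mxpowS n (A : 'M[nat]_n) l : mxpow A l.+1 = A *m mxpow A l.
Proof. by []. Qed.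

Lemma mxpow0 n (A : 'M[nat]_n) : mxpow A 0 = 1%:M.
Proof. by []. Qed.

Lemma mxpow1 n (A : 'M[nat]_n) : mxpow A 1 = A.
Proof. by rewrite mxpowS mxpow0 mulmx1. Qed.

Lemma mxpowD n (A : 'M[nat]_n) a b : mxpow A (a + b) = mxpow A a *m mxpow A b.
Proof.
elim: a => [|a IH]; first by rewrite add0n mxpow0 mul1mx.
by rewrite addSn !mxpowS IH mulmxA.
Qed.

Lemma mxpowC n (A : 'M[nat]_n) a b :
  mxpow A a *m mxpow A b = mxpow A b *m mxpow A a.
Proof. by rewrite -!mxpowD addnC. Qed.

Lemma mxpow_intertwine m n (A : 'M[nat]_m) (B : 'M[nat]_n) (R : 'M[nat]_(m, n)) p :
  A *m R = R *m B -> mxpow A p *m R = R *m mxpow B p.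
Proof.
move=> AR_RB; elim: p => [|p IH]; first by rewrite !mxpow0 mul1mx mulmx1.
by rewrite !mxpowS -mulmxA IH mulmxA AR_RB -mulmxA.
Qed.

Lemma mxpow_trmx n (A : 'M[nat]_n) p : mxpow A^T p = (mxpow A p)^T.
Proof.
elim: p => [|p IH]; first by rewrite !mxpow0 tr_scalar_mx.
by rewrite !mxpowS IH -trmx_mul (mxpow_intertwine p (erefl (A *m A))).
Qed.

Lemma shift_equiv_via_trans m n q (A : 'M[nat]_m) (B : 'M[nat]_n) (C : 'M[nat]_q)
    l1 l2 R1 S1 R2 S2 :
  shift_equiv_via A B l1 R1 S1 -> shift_equiv_via B C l2 R2 S2 ->
  shift_equiv_via A C (l1 + l2) (R1 *m R2) (S2 *m S1).
Proof.
move=> [l1_gt0 [AR1S1 [BS1R1 [AR1 BS1]]]] [_ [BR2S2 [CS2R2 [BR2 CS2]]]].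
split; first exact: leq_trans l1_gt0 (leq_addr _ _).
split; first by rewrite mxpowD AR1S1 -mulmxA -(mxpow_intertwine l2 BS1) BR2S2 -!mulmxA.
split; first by rewrite addnC mxpowD CS2R2 -mulmxA -(mxpow_intertwine l1 BR2) BS1R1 -!mulmxA.
split; first by rewrite mulmxA AR1 -mulmxA BR2 mulmxA.
by rewrite mulmxA CS2 -mulmxA BS1 mulmxA.
Qed.

Lemma shift_equiv_via_sym m n (A : 'M[nat]_m) (B : 'M[nat]_n) l R S k :
  shift_equiv_via A B l R S -> shift_equiv_via B A (l + k) (S *m mxpow A k) R.
Proof.
move=> [l_gt0 [ARS [BSR [AR BS]]]].
split; first exact: leq_trans l_gt0 (leq_addr _ _).
split; first by rewrite mxpowD BSR -!mulmxA -(mxpow_intertwine k AR).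
split; first by rewrite mxpowD ARS -!mulmxA.
split; last by rewrite AR.
by rewrite mulmxA BS -!mulmxA -{1}(mxpow1 A) mxpowC mxpow1.
Qed.

Definition colsums m n (X : 'M[nat]_(m, n)) : 'cV[nat]_n := X^T *m const_mx 1%N.

Lemma colsums_mul m n p (X : 'M[nat]_(m, n)) (Y : 'M[nat]_(n, p)) :
  colsums (X *m Y) = Y^T *m colsums X.
Proof. by rewrite /colsums trmx_mul mulmxA. Qed.

Lemma eq_colsums_mulr m1 m2 n p (X : 'M[nat]_(m1, n)) (Y : 'M[nat]_(m2, n))
    (Z : 'M[nat]_(n, p)) :
  colsums X = colsums Y -> colsums (X *m Z) = colsums (Y *m Z).
Proof. by rewrite !colsums_mul => ->. Qed.

Lemma colsums1 n : colsums (1%:M : 'M[nat]_n) = const_mx 1%N.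
Proof. by rewrite /colsums trmx1 mul1mx. Qed.

Lemma colsums_division_matrix m n (D : 'M[nat]_(m, n)) :
  division_matrix D -> colsums D = const_mx 1%N.
Proof.
move=> [D01 [_ D_col]]; apply/matrixP => j z; rewrite !mxE.
have [i [Dij1 Dij_uniq]] := D_col j.
rewrite (bigD1 i) //= !mxE Dij1 big1 ?addr0 // => i' i'_neq_i; rewrite !mxE.
case: (D01 i' j) => [-> //|Di'j1].
by move: i'_neq_i; rewrite (Dij_uniq i' Di'j1) eqxx.
Qed.

Lemma unitally_seP m n (A : 'M[nat]_m) (B : 'M[nat]_n) :
  unitally_se A B <->
  exists l R S, shift_equiv_via A B l R S /\
    exists p k, colsums (R *m mxpow B p) = colsums (mxpow B (p + k)).
Proof.
have unitalE (R : 'M[nat]_(m, n)) p k :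
    mxpow B^T p *m R^T *m (const_mx 1%N : 'cV[nat]_m) =
      mxpow B^T (p + k) *m (const_mx 1%N : 'cV[nat]_n) <->
    colsums (R *m mxpow B p) = colsums (mxpow B (p + k)).
  by rewrite /colsums !mxpow_trmx trmx_mul.
split=> [[l [R [S [SE [p [k /unitalE]]]]]] | [l [R [S [SE [p [k /unitalE]]]]]]].
  by exists l, R, S; split; last exists p, k.
by exists l, R, S; split; last exists p, k.
Qed.

Lemma unitally_se_refl m (A : 'M[nat]_m) : unitally_se A A.
Proof.
apply/unitally_seP; exists 1%N, 1%:M, A; split.
  by rewrite /shift_equiv_via mxpow1 mul1mx mulmx1.
by exists 0%N, 0%N; rewrite mul1mx.
Qed.

Lemma unitally_se_sym m n (A : 'M[nat]_m) (B : 'M[nat]_n) :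
  unitally_se A B -> unitally_se B A.
Proof.
move=> /unitally_seP [l [R [S [SE [p [k unital]]]]]].
have [_ [ARS [_ [_ BS]]]] := SE.
apply/unitally_seP; exists (l + k)%N, (S *m mxpow A k), R.
split; first exact: shift_equiv_via_sym.
exists p, l.
have := eq_colsums_mulr S unital.
rewrite -mulmxA (mxpow_intertwine p BS) mulmxA -ARS -mxpowD.
rewrite (mxpow_intertwine _ BS) => colsums_powA.
by rewrite -mulmxA -mxpowD (addnC k) -colsums_powA addnC.
Qed.

Lemma unitally_se_trans m n q (A : 'M[nat]_m) (B : 'M[nat]_n) (C : 'M[nat]_q) :
  unitally_se A B -> unitally_se B C -> unitally_se A C.
Proof.
move=> /unitally_seP [l1 [R1 [S1 [SE1 [p1 [k1 unital1]]]]]].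
move=> /unitally_seP [l2 [R2 [S2 [SE2 [p2 [k2 unital2]]]]]].
have [_ [_ [_ [BR2 _]]]] := SE2.
apply/unitally_seP; exists (l1 + l2)%N, (R1 *m R2), (S2 *m S1).
split; first exact: shift_equiv_via_trans SE1 SE2.
exists (p1 + p2)%N, (k1 + k2)%N.
rewrite mxpowD mulmxA -[R1 *m R2 *m _]mulmxA -(mxpow_intertwine p1 BR2) mulmxA.
rewrite (eq_colsums_mulr _ (eq_colsums_mulr R2 unital1)).
rewrite (mxpow_intertwine _ BR2) -mulmxA mxpowC mulmxA.
rewrite (eq_colsums_mulr _ unital2) -!mxpowD.
by rewrite addnC addnACA.
Qed.

Lemma outsplit_unitally_se m n (A : 'M[nat]_m) (B : 'M[nat]_n) :
  outsplit A B -> unitally_se A B.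
Proof.
move=> [_ [_ [D [E [D_div [A_DE B_ED]]]]]].
apply/unitally_seP; exists 1%N, D, E; split.
  by rewrite /shift_equiv_via !mxpow1 A_DE B_ED !mulmxA.
by exists 0%N, 0%N; rewrite mxpow0 mulmx1 colsums1 colsums_division_matrix.
Qed.

Lemma bal_elem_sse_unitally_se m (A B : 'M[nat]_m) :
  bal_elem_sse A B -> unitally_se A B.
Proof.
move=> [k [D [RA [RB [_ [A_DRA [B_DRB RAD_RBD]]]]]]].
have AA_BA : A *m A = B *m A.
  by rewrite {1}A_DRA B_DRB -!mulmxA; congr (_ *m _); rewrite A_DRA !mulmxA RAD_RBD.
have BB_AB : B *m B = A *m B.
  by rewrite {1}B_DRB A_DRA -!mulmxA; congr (_ *m _); rewrite B_DRB !mulmxA RAD_RBD.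
apply/unitally_seP; exists 2%N, B, A; split.
  by rewrite /shift_equiv_via !mxpowS mxpow0 !mulmx1 AA_BA BB_AB.
by exists 0%N, 1%N; rewrite mxpow0 mulmx1 mxpow1.
Qed.

Lemma bsse_step_unitally_se (X Y : sqmat) :
  bsse_step X Y -> unitally_se (projT2 X) (projT2 Y).
Proof.
by case=> [/outsplit_unitally_se | [k [A [B [-> [-> /bal_elem_sse_unitally_se]]]]]].
Qed.

Theorem proposition4p1 (m n : nat) (A : 'M[nat]_m) (B : 'M[nat]_n) :
  bal_sse A B -> unitally_se A B.
Proof.
move=> AB.
suff closure_unitally_se X Y : clos_refl_sym_trans sqmat bsse_step X Y ->
    unitally_se (projT2 X) (projT2 Y) by exact: closure_unitally_se AB.
elim=> [x y /bsse_step_unitally_se // | x | x y _ | x y z _ IH1 _ IH2].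
- exact: unitally_se_refl.
- exact: unitally_se_sym.
- exact: unitally_se_trans IH1 IH2.
Qed.
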